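(* Let $\mathcal{G}$ be a groupoid, $\mathbb{K}$ a field, and $\sigma :\mathcal{G} \times\mathcal{G} \to \mathbb{K}$ a map taking only the values $0$ and $1$, with $\sigma(e,e) = 1$ for all $e \in \mathcal{G}_0$, and such that for all $(x,y) \in \mathrm{dom}\,\sigma$, $$(xy,y^{-1}),\ (y^{-1},x^{-1}),\ (x,d(x)) \in \mathrm{dom}\,\sigma.$$ Let $(a,b),(c,f) \in \mathcal{G}^2$ be such that $\sigma(a,b) = 0$ and $\{ a^{-1}, b \} \subseteq \{ d(c), c^{-1}, f \}$. Then $\sigma(c,f) = 0$.
   Context: A groupoid is a nonempty set $\mathcal{G}$ with a partial associative product, each $g$ having right identity $d(g)=g^{-1}g$, left identity $r(g)=gg^{-1}$ and inverse $g^{-1}$; $xy$ is defined iff $d(x)=r(y)$; $\mathcal{G}_0$ is the set of identities and $\mathcal{G}^2$ the set of composable pairs. For such $\sigma$, $\mathrm{dom}\,\sigma=\{(x,y)\in\mathcal{G}\times\mathcal{G}:\sigma(x,y)\neq0\}$. *)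

From mathcomp Require Import all_boot all_algebra.
Set Implicit Arguments. Unset Strict Implicit. Unset Printing Implicit Defensive.

(* A groupoid: a nonempty set with a partial associative product, given here
   as a total function [gmul] that is only meaningful on composable pairs,
   and an inverse.  d g = g^-1 g, r g = g g^-1, and x y is defined iff
   d x = r y. *)
Record groupoid := Groupoid {
  gcarrier :> Type;
  gmul : gcarrier -> gcarrier -> gcarrier;
  ginv : gcarrier -> gcarrier;
  g_nonempty : inhabited gcarrier;
  ginvK : forall x, ginv (ginv x) = x;
  gd_mul : forall x y, gmul (ginv x) x = gmul y (ginv y) ->
             gmul (ginv (gmul x y)) (gmul x y) = gmul (ginv y) y;
  gr_mul : forall x y, gmul (ginv x) x = gmul y (ginv y) ->
             gmul (gmul x y) (ginv (gmul x y)) = gmul x (ginv x);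
  gmulA : forall x y z, gmul (ginv x) x = gmul y (ginv y) ->
            gmul (ginv y) y = gmul z (ginv z) ->
            gmul (gmul x y) z = gmul x (gmul y z);
  gmul_d : forall x, gmul x (gmul (ginv x) x) = x;
  gr_mul_l : forall x, gmul (gmul x (ginv x)) x = x
}.

Section GroupoidDefs.
Variable G : groupoid.
Definition gd (g : G) : G := gmul (ginv g) g.
Definition gr (g : G) : G := gmul g (ginv g).
Definition composable (x y : G) : Prop := gd x = gr y.
Definition is_identity (e : G) : Prop := exists g : G, e = gd g.
End GroupoidDefs.

From mathcomp Require Import all_boot all_algebra.
Local Open Scope ring_scope.
Set Implicit Arguments. Unset Strict Implicit.

(* Only the support D = dom σ matters, and it is closed under the three
   rules.  Chaining them from (x, d x) puts (d x, x^-1), (x^-1, x),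
   (x, x^-1) and (d x, d x) in D.  Applied to x = c and to x = f^-1, for
   which d(f^-1) = r(f) = d(c), this covers all nine pairs with first entry
   in {d c, c, f^-1} and second entry in {d c, c^-1, f}, which is where
   (a, b) lies; so σ(c, f) <> 0 would force σ(a, b) <> 0. *)

Section GroupoidIdentities.
Variable G : groupoid.
Implicit Types x : G.

Lemma gd_gd x : gd (gd x) = gd x.
Proof. by have := @gd_mul G (ginv x) x; rewrite ginvK; apply. Qed.

Lemma gr_gd x : gr (gd x) = gd x.
Proof. by have := @gr_mul G (ginv x) x; rewrite ginvK; apply. Qed.

Lemma gd_ginv x : gd (ginv x) = gr x.
Proof. by rewrite /gd /gr ginvK. Qed.

Lemma gr_ginv x : gr (ginv x) = gd x.
Proof. by rewrite /gd /gr ginvK. Qed.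

Lemma gmul_gd_ginv x : gmul (gd x) (ginv x) = ginv x.
Proof. by have := gr_mul_l (ginv x); rewrite ginvK. Qed.

Lemma ginv_gd x : ginv (gd x) = gd x.
Proof.
have := gr_mul_l (ginv (gd x)); rewrite ginvK -/(gd (gd x)) gd_gd => <-.
exact: gr_gd.
Qed.

Lemma composable_gd x : composable x (gd x).
Proof. by rewrite /composable gr_gd. Qed.

Lemma composable_gd_ginv x : composable (gd x) (ginv x).
Proof. by rewrite /composable gd_gd gr_ginv. Qed.

End GroupoidIdentities.

Section ClosedDomain.
Variables (G : groupoid) (D : G -> G -> Prop).
Hypothesis D_mul_inv :
  forall x y, composable x y -> D x y -> D (gmul x y) (ginv y).
Hypothesis D_inv : forall x y, composable x y -> D x y -> D (ginv y) (ginv x).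
Hypothesis D_gd : forall x y, composable x y -> D x y -> D x (gd x).

Lemma D_gd_ginv x : D x (gd x) -> D (gd x) (ginv x).
Proof. by move/(D_inv (composable_gd x)); rewrite ginv_gd. Qed.

Lemma D_ginv_l x : D x (gd x) -> D (ginv x) x.
Proof.
by move/D_gd_ginv/(D_mul_inv (composable_gd_ginv x)); rewrite gmul_gd_ginv ginvK.
Qed.

Lemma D_ginv_r x : D x (gd x) -> D x (ginv x).
Proof.
move/D_ginv_l; have cx : composable (ginv x) x by rewrite /composable gd_ginv.
move/(D_gd cx)/D_gd_ginv; rewrite gd_ginv ginvK.
have crx : composable (gr x) x by rewrite /composable -gd_ginv gd_gd.
by move/(D_mul_inv crx); rewrite gr_mul_l.
Qed.

Lemma D_gd_gd x : D x (gd x) -> D (gd x) (gd x).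
Proof.
by move/D_gd_ginv/(D_gd (composable_gd_ginv x)); rewrite gd_gd.
Qed.

Lemma D_of_subset c f u v : composable c f -> D c f ->
  [\/ ginv u = gd c, ginv u = ginv c | ginv u = f] ->
  [\/ v = gd c, v = ginv c | v = f] -> D u v.
Proof.
move=> ccf Dcf Hu Hv.
have Dc : D c (gd c) := D_gd ccf Dcf.
have cfc : composable (ginv f) (ginv c) by rewrite /composable gd_ginv gr_ginv.
have Dfc : D (ginv f) (ginv c) := D_inv ccf Dcf.
have Df : D (ginv f) (gd (ginv f)) := D_gd cfc Dfc.
have df : gd (ginv f) = gd c by rewrite gd_ginv.
have Dff : D (ginv f) f by rewrite -{2}(ginvK f); apply: D_ginv_r.
have Ddf : D (gd c) f by rewrite -df -{2}(ginvK f); apply: D_gd_ginv.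
rewrite df in Df.
have Dcc := D_ginv_r Dc; have Ddc := D_gd_ginv Dc; have Ddd := D_gd_gd Dc.
rewrite -(ginvK u).
by case: Hu => ->; case: Hv => ->; rewrite ?ginvK ?ginv_gd.
Qed.

End ClosedDomain.

Theorem mainTheorem10 (G : groupoid) (K : fieldType) (sigma : G -> G -> K)
  (Hval : forall x y : G, sigma x y = 0 \/ sigma x y = 1)
  (Hid : forall e : G, is_identity e -> sigma e e = 1)
  (Hdom : forall x y : G, composable x y -> sigma x y != 0 ->
     [/\ sigma (gmul x y) (ginv y) != 0,
         sigma (ginv y) (ginv x) != 0 &
         sigma x (gd x) != 0])
  (a b c f : G) (Hab : composable a b) (Hcf : composable c f)
  (Hs : sigma a b = 0)
  (Hsub : forall z : G, z = ginv a \/ z = b -> [\/ z = gd c, z = ginv c | z = f]) :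
  sigma c f = 0.
Proof.
case: (eqVneq (sigma c f) 0) => // sigma_cf.
suff : sigma a b != 0 by rewrite Hs eqxx.
apply: (@D_of_subset G (fun x y => sigma x y != 0) _ _ _ c f a b Hcf sigma_cf
  (Hsub _ (or_introl erefl)) (Hsub _ (or_intror erefl)));
  by move=> x y cxy /(Hdom _ _ cxy) [].
Qed.
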